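(* Let $H$ be a real Hilbert space and let $T:H\to H$ be a nonexpansive operator with $Fix(T)=\{x\in H:Tx=x\}\neq\varnothing$. Let $z^{0},z^{-1}\in H$, let $\{e^k\}_{k\ge0}$ be a sequence in $H$, let $\{\alpha_k\}_{k\ge0},\{\lambda_k\}_{k\ge0}$ be nondecreasing real sequences, and define for $k\ge0$ $$\mu^{k}=z^{k}+\alpha_{k}(z^{k}-z^{k-1}),\qquad z^{k+1}=\mu^{k}+\lambda_{k}(T\mu^{k}+e^{k}-\mu^{k}).$$ Assume: (a) there is $\alpha\in[0,1)$ with $0\le\alpha_k\le\alpha$ for all $k$, and $\alpha_0=0$; (b) there are $\lambda,\sigma,\delta>0$ such that $$\delta>\frac{\alpha[\alpha(1+\alpha)+\sigma]}{1-\alpha^2}\quad\text{and}\quad 0<\lambda\le\lambda_k\le\frac{\delta-\alpha[\alpha(1+\alpha)+\alpha\delta+\sigma]}{\delta[1+\alpha(1+\alpha)+\alpha\delta+\sigma]}\ \text{ for all }k;$$ (c) the sequence $\{z^k\}$ is bounded; (d) $\sum_{k=0}^{+\infty}\|e^k\|<+\infty$. Then: (i) $\sum_{k=0}^{\infty}\|z^{k+1}-z^k\|^2<+\infty$, and in particular $\lim_{k\to+\infty}\|z^{k+1}-z^k\|=0$; (ii) for every $z^*\in Fix(T)$, $\lim_{k\to+\infty}\|z^k-z^*\|$ exists; (iii) $\lim_{k\to+\infty}\|T\mu^k-\mu^k\|=0$ and $\{z^k\}$ converges weakly to a fixed point of $T$. *)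

From HB Require Import structures.
From mathcomp Require Import all_boot all_order all_algebra.
From mathcomp Require Import all_classical all_reals all_analysis.
Set Implicit Arguments. Unset Strict Implicit. Unset Printing Implicit Defensive.
Import Order.TTheory GRing.Theory Num.Theory.
Import numFieldNormedType.Exports.
Local Open Scope classical_set_scope.
Local Open Scope ring_scope.

(* A real Hilbert space is a complete normed space (over a realType R)
   whose norm is induced by an inner product [ip]: symmetric, linear in
   the first argument, and ip x x = |x|^2. *)
Definition is_inner_product {R : realType} {H : normedModType R}
  (ip : H -> H -> R) : Prop :=
  [/\ forall x y : H, ip x y = ip y x,
      forall (a : R) (x y w : H), ip (a *: x + y) w = a * ip x w + ip y w
    & forall x : H, ip x x = `|x| ^+ 2].

Definition nonexpansive {R : realType} {H : normedModType R} (T : H -> H) : Prop :=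
  forall x y : H, `|T x - T y| <= `|x - y|.

Definition fixed_point {R : realType} {H : normedModType R} (T : H -> H) (x : H) : Prop :=
  T x = x.

Definition weakly_converges {R : realType} {H : normedModType R}
  (ip : H -> H -> R) (u : nat -> H) (l : H) : Prop :=
  forall y : H, (fun k => ip (u k) y) @ \oo --> ip l y.

(* Fix p in Fix(T) and let phi_k = |z_k - p|^2. The step from mu_k to z_{k+1} is a
   relaxed nonexpansive step, so phi_{k+1} plus (1 - lambda_k)/lambda_k |z_{k+1} - mu_k|^2
   is at most |mu_k - p|^2 up to an error linear in |e_k|. Expanding
   mu_k = z_k + alpha_k (z_k - z_{k-1}) and using the upper bound on lambda_k, the
   Lyapunov function phi_k - alpha_k phi_{k-1} + beta_k |z_k - z_{k-1}|^2 decreases by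
   sigma |z_{k+1} - z_k|^2 up to a summable error, which gives (i). Since alpha_k <= a < 1,
   the positive parts of phi_{k+1} - phi_k are then summable, so phi_k converges (ii),
   and the residuals are controlled by |z_{k+1} - z_k| and |e_k| (iii).
   Weak convergence is obtained without weak compactness, from asymptotic centres: as
   |T z_k - z_k| -> 0, the minimiser c of x |-> limsup_k |z_k - x|^2 exists (parallelogram
   law and completeness) and is a fixed point. Along a subsequence with <z_k - c, y> >= e,
   the radius limsup |z_k - x|^2 at x = c + t y drops below the one at c for small t > 0.
   But the asymptotic centre of the subsequence is a fixed point too, and at fixed points
   the radii along z and along the subsequence agree by (ii); so c is also minimal for the
   subsequence, a contradiction. *)

From HB Require Import structures.
From mathcomp Require Import all_boot all_order all_algebra.
From mathcomp Require Import all_classical all_reals all_analysis.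
From mathcomp Require Import ring lra.
Set Implicit Arguments. Unset Strict Implicit. Unset Printing Implicit Defensive.
Import Order.TTheory GRing.Theory Num.Theory.
Import numFieldNormedType.Exports.
Local Open Scope classical_set_scope.
Local Open Scope ring_scope.

Section InnerProduct.
Variables (R : realType) (H : normedModType R) (ip : H -> H -> R).
Hypothesis ipP : is_inner_product ip.
Implicit Types (p w x y : H).

Lemma ipC x y : ip x y = ip y x.
Proof. by case: ipP. Qed.

Lemma ipDl x y w : ip (x + y) w = ip x w + ip y w.
Proof. by case: ipP => _ lin _; have := lin 1 x y w; rewrite scale1r mul1r. Qed.

Lemma ip0l w : ip 0 w = 0.
Proof. by have := ipDl 0 0 w; rewrite addr0; lra. Qed.

Lemma ipZl a x w : ip (a *: x) w = a * ip x w.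
Proof. by case: ipP => _ lin _; have := lin a x 0 w; rewrite !addr0 ip0l addr0. Qed.

Lemma ipNl x w : ip (- x) w = - ip x w.
Proof. by rewrite -scaleN1r ipZl mulN1r. Qed.

Lemma ipBl x y w : ip (x - y) w = ip x w - ip y w.
Proof. by rewrite ipDl ipNl. Qed.

Lemma ipDr x y w : ip w (x + y) = ip w x + ip w y.
Proof. by rewrite ipC ipDl !(ipC w). Qed.

Lemma ipZr a x w : ip w (a *: x) = a * ip w x.
Proof. by rewrite ipC ipZl ipC. Qed.

Lemma ipNr x w : ip w (- x) = - ip w x.
Proof. by rewrite ipC ipNl ipC. Qed.

Lemma ipBr x y w : ip w (x - y) = ip w x - ip w y.
Proof. by rewrite ipDr ipNr. Qed.

Let ipE := (ipBl, ipDl, ipZl, ipNl, ipBr, ipDr, ipZr, ipNr).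

Lemma sqr_normE x : `|x| ^+ 2 = ip x x.
Proof. by case: ipP. Qed.

Lemma sqr_normD x y : `|x + y| ^+ 2 = `|x| ^+ 2 + 2 * ip x y + `|y| ^+ 2.
Proof. by rewrite !sqr_normE !ipE (ipC y x); ring. Qed.

Lemma sqr_normBZ c x y :
  `|x - c *: y| ^+ 2 = `|x| ^+ 2 - 2 * c * ip x y + c ^+ 2 * `|y| ^+ 2.
Proof. by rewrite !sqr_normE !ipE (ipC y x); ring. Qed.

Lemma ip_le_norm x y : ip x y <= `|x| * `|y|.
Proof.
have : `|x + y| ^+ 2 <= (`|x| + `|y|) ^+ 2.
  by rewrite ler_sqr ?nnegrE ?addr_ge0 ?ler_normD.
rewrite sqr_normD; lra.
Qed.

Lemma sqr_norm_midpoint w x y : `|w - 2^-1 *: (x + y)| ^+ 2 =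
  2^-1 * `|w - x| ^+ 2 + 2^-1 * `|w - y| ^+ 2 - `|x - y| ^+ 2 / 4.
Proof. by rewrite !sqr_normE !ipE (ipC x w) (ipC y w) (ipC y x); field. Qed.

Lemma sqr_norm_extrapolate c x (x' : H) p :
  `|x + c *: (x - x') - p| ^+ 2 =
  (1 + c) * `|x - p| ^+ 2 - c * `|x' - p| ^+ 2 + c * (1 + c) * `|x - x'| ^+ 2.
Proof. by rewrite !sqr_normE !ipE (ipC x' x) (ipC p x) (ipC p x'); ring. Qed.

End InnerProduct.

Section LimnSup.
Variable R : realType.
Implicit Types (u v w : R^o^nat) (a b c B : R).

Lemma bounded_fun_le u B : (forall k, `|u k| <= B) -> bounded_fun u.
Proof.
move=> uB; rewrite /= /bounded_near; near=> M => k _ /=.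
rewrite (le_trans (uB k)) //; near: M; exact: nbhs_pinfty_ge.
Unshelve. all: by end_near. Qed.

Lemma cvg_sups_limn_sup u : bounded_fun u -> sups u @ \oo --> limn_sup u.
Proof.
move=> bu; rewrite limn_supE //.
exact: cvg_sups_inf (bounded_fun_has_ubound bu) (bounded_fun_has_lbound bu).
Qed.

Lemma limn_sup_le_lincomb u v w a b c :
  bounded_fun u -> bounded_fun v -> bounded_fun w -> 0 <= a -> 0 <= b ->
  (\forall k \near \oo, u k <= a * v k + b * w k + c) ->
  limn_sup u <= a * limn_sup v + b * limn_sup w + c.
Proof.
move=> bu bv bw a0 b0 [N _ uN].
have sdrop_ub (z : R^o^nat) n : bounded_fun z -> has_ubound (sdrop z n).
  by move=> bz; apply/has_ubound_sdrop/bounded_fun_has_ubound.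
apply: (ler_cvg_to (cvg_sups_limn_sup bu)).
  apply: cvgD; [apply: cvgD|exact: cvg_cst]; apply: cvgMl_tmp; exact: cvg_sups_limn_sup.
near=> n; have Nn : (N <= n)%N by near: n; exists N.
apply: ge_sup; first by exists (u n), n => /=.
move=> _ [k /= nk <-]; apply: (le_trans (uN k (leq_trans Nn nk))).
rewrite lerD2r; apply: lerD; apply: ler_wpM2l => //; apply: ub_le_sup;
  by [exact: sdrop_ub | exists k].
Unshelve. all: by end_near. Qed.

Lemma limn_sup_le_add u v c : bounded_fun u -> bounded_fun v ->
  (\forall k \near \oo, u k <= v k + c) -> limn_sup u <= limn_sup v + c.
Proof.
move=> bu bv uv; have := limn_sup_le_lincomb bu bv bv ler01 (lexx 0).
by rewrite mul1r mul0r addr0; apply; apply: filterS uv => k; rewrite mul1r mul0r addr0.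
Qed.

End LimnSup.

Lemma cvg_subseq_ge {T : ptopologicalType} (f : nat -> T) (n : nat -> nat) (l : T) :
  (forall j, (j <= n j)%N) -> f @ \oo --> l -> (f \o n) @ \oo --> l.
Proof.
move=> n_ge fl; apply: cvg_comp fl; apply/cvgnyPge => A.
by near=> j; apply: leq_trans (n_ge j); near: j; exists A.
Unshelve. all: by end_near. Qed.

Section RealSequences.
Variable R : realType.
Implicit Types (x t : R^o^nat) (S : R).

Lemma nneseries_ltyP x : (forall k, 0 <= x k) ->
  (\sum_(0 <= k <oo) (x k)%:E < +oo)%E <->
  exists S, forall n, \sum_(0 <= k < n) x k <= S.
Proof.
move=> x0; have x0E k : (0 <= (x k)%:E)%E by rewrite lee_fin.
split => [lty|[S xS]].
  exists (fine (\sum_(0 <= k <oo) (x k)%:E)) => n.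
  rewrite -lee_fin fineK; last by rewrite ge0_fin_numE // nneseries_ge0.
  by rewrite -sumEFin; apply: nneseries_lim_ge.
apply: (@le_lt_trans _ _ S%:E); last exact: ltry.
apply: lime_le; first exact: is_cvg_nneseries.
by apply: nearW => n; rewrite sumEFin lee_fin.
Qed.

Lemma bounded_series_is_cvg x S : (forall k, 0 <= x k) ->
  (forall n, \sum_(0 <= k < n) x k <= S) -> cvgn (series x).
Proof.
move=> x0 xS; apply: nondecreasing_is_cvgn.
  exact: (@nondecreasing_series _ _ predT 0).
by exists S => _ [n _ <-]; exact: xS.
Qed.

Lemma bounded_series_cvg0 x S : (forall k, 0 <= x k) ->
  (forall n, \sum_(0 <= k < n) x k <= S) -> x @ \oo --> 0.
Proof. by move=> x0 xS; apply: cvg_series_cvg_0; exact: bounded_series_is_cvg x0 xS. Qed.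

Lemma quasi_fejer_is_cvg x t S : (forall k, 0 <= x k) -> (forall k, 0 <= t k) ->
  (forall n, \sum_(0 <= k < n) t k <= S) -> (forall k, x k.+1 <= x k + t k) ->
  cvgn x.
Proof.
move=> x0 t0 tS xt; have ct := bounded_series_is_cvg t0 tS.
have cy : cvgn (fun n => x n - series t n).
  apply: nonincreasing_is_cvgn.
    apply/nonincreasing_seqP => n; rewrite /series /= big_nat_recr //=.
    by have := xt n; lra.
  by exists (- S) => _ [n _ <-]; have := x0 n; have := tS n; rewrite /series /=; lra.
have -> : x = (fun n => (x n - series t n) + series t n).
  by apply/funext => n; rewrite subrK.
exact: is_cvgD cy ct.
Qed.

Lemma cvg_sqrt_sqr x l : (forall k, 0 <= x k) ->
  (fun k => x k ^+ 2) @ \oo --> l -> x @ \oo --> Num.sqrt l.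
Proof.
move=> x0 /(cvg_comp _ _)/(_ (@sqrt_continuous R l)).
suff -> : Num.sqrt \o (fun k => x k ^+ 2) = x by [].
by apply/funext => k /=; rewrite sqrtr_sqr ger0_norm.
Qed.

End RealSequences.

Lemma cvgn_sqr_dist_le (R : realType) (V : completeNormedModType R) (x : nat -> V)
    (g : R^o^nat) :
  g @ \oo --> 0 -> (forall n k, `|x n - x k| ^+ 2 <= g n + g k) -> cvgn x.
Proof.
move=> g0 xg; apply: cauchy_cvg; apply: cauchy_exP => e e0.
have [N _ gN] : \forall n \near \oo, g n < e ^+ 2 / 2.
  by apply: cvgr_lt g0 _ _; rewrite divr_gt0 // exprn_gt0.
exists (x N); exists N => // n /= Nn; rewrite -ball_normE /=.
rewrite -(@ltr_pXn2r _ 2%N) // ?nnegrE ?(ltW e0) //.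
by apply: le_lt_trans (xg N n) _; have := gN N (leqnn N); have := gN n Nn; lra.
Qed.

Section AsymptoticRadius.
Variables (R : realType) (H : normedModType R) (u : nat -> H) (M : R).
Hypothesis u_le : forall k, `|u k| <= M.
Implicit Types (c x y : H).

Definition asym_rad x := limn_sup (fun k => `|u k - x| ^+ 2).

Lemma bounded_sqr_dist x : bounded_fun (fun k => `|u k - x| ^+ 2).
Proof.
apply: (@bounded_fun_le _ _ ((M + `|x|) ^+ 2)) => k.
have M0 : 0 <= M := le_trans (normr_ge0 _) (u_le 0).
rewrite ger0_norm ?exprn_ge0 // ler_sqr ?nnegrE ?addr_ge0 //.
exact: le_trans (ler_normB _ _) (lerD (u_le k) (lexx _)).
Qed.

Lemma asym_rad_ge0 x : 0 <= asym_rad x.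
Proof.
have <- : limn_sup (fun=> 0 : R) = 0 by exact: (cvg_limn_inf_sup (cvg_cst _)).2.
rewrite -[asym_rad x]addr0; apply: limn_sup_le_add (bounded_sqr_dist x) _.
  by apply: (@bounded_fun_le _ _ 0) => k; rewrite normr0.
by apply: nearW => k; rewrite addr0 exprn_ge0.
Qed.

Lemma asym_rad_le_dist x y :
  asym_rad y <= asym_rad x + (2 * (M + `|y|) + 3 * `|x - y|) * `|x - y|.
Proof.
apply: limn_sup_le_add (bounded_sqr_dist y) (bounded_sqr_dist x) _.
apply: nearW => k; set d := `|x - y|.
have uy : `|u k - y| <= `|u k - x| + d by exact: ler_distD.
have ux : `|u k - x| <= `|u k - y| + d by rewrite /d (distrC x y); exact: ler_distD.
have uyM : `|u k - y| <= M + `|y|.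
  exact: le_trans (ler_normB _ _) (lerD (u_le k) (lexx _)).
have := normr_ge0 (u k - y); have := normr_ge0 (u k - x); have := normr_ge0 (x - y).
rewrite -/d; nra.
Qed.

Variable ip : H -> H -> R.
Hypothesis ipP : is_inner_product ip.

Lemma asym_rad_midpoint x y : asym_rad (2^-1 *: (x + y)) <=
  2^-1 * asym_rad x + 2^-1 * asym_rad y - `|x - y| ^+ 2 / 4.
Proof.
apply: limn_sup_le_lincomb; rewrite ?invr_ge0 ?ler0n //; try exact: bounded_sqr_dist.
by apply: nearW => k; rewrite (sqr_norm_midpoint ipP).
Qed.

Variable T : H -> H.
Hypotheses (T_nonexp : nonexpansive T)
  (Tu : (fun k => `|T (u k) - u k|) @ \oo --> 0).

Lemma asym_rad_T x : asym_rad (T x) <= asym_rad x.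
Proof.
apply/ler_addgt0Pr => e e0.
have M0 : 0 <= M := le_trans (normr_ge0 _) (u_le 0).
set K := 2 * (M + `|x|) + 1.
have K0 : 0 < K by rewrite /K; have := normr_ge0 x; lra.
apply: limn_sup_le_add (bounded_sqr_dist _) (bounded_sqr_dist x) _.
near=> k.
have s1 : `|T (u k) - u k| <= 1 by near: k; apply: cvgr_le Tu _ ltr01.
have sK : `|T (u k) - u k| * K <= e.
  by rewrite -ler_pdivlMr //; near: k; apply: cvgr_le Tu _ (divr_gt0 e0 K0).
set s := `|T (u k) - u k| in s1 sK *.
have uTx : `|u k - T x| <= s + `|u k - x|.
  apply: le_trans (ler_distD (T (u k)) _ _) _.
  by rewrite distrC lerD2l T_nonexp.
have ux : `|u k - x| <= M + `|x| by exact: le_trans (ler_normB _ _) (lerD (u_le k) (lexx _)).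
have s0 : 0 <= s by exact: normr_ge0.
have : `|u k - T x| ^+ 2 <= (s + `|u k - x|) ^+ 2 by rewrite ler_sqr ?nnegrE ?addr_ge0.
have : s * `|u k - x| <= s * (M + `|x|) by rewrite ler_wpM2l.
have : s * s <= s * 1 by rewrite ler_wpM2l.
move: sK; rewrite /K; lra.
Unshelve. all: by end_near. Qed.

End AsymptoticRadius.

Section AsymptoticCenter.
Variables (R : realType) (H : completeNormedModType R) (ip : H -> H -> R).
Hypothesis ipP : is_inner_product ip.
Variables (u : nat -> H) (M : R).
Hypothesis u_le : forall k, `|u k| <= M.

Lemma asym_rad_has_min : exists c, forall x, asym_rad u c <= asym_rad u x.
Proof.
set m := inf (range (asym_rad u)).
have m_le x : m <= asym_rad u x.
  by apply: ge_inf; [exists 0 => _ [y _ <-]; exact: asym_rad_ge0 u_le y | exists x].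
have range0 : range (asym_rad u) !=set0 by exists (asym_rad u 0), 0.
have /choice [xs xs_lt] : forall n, exists x, asym_rad u x < m + harmonic n.
  move=> n; have [|_ [x _ <-] ?] := @inf_lt _ _ (m + harmonic n) range0.
    by rewrite ltrDl /harmonic /= invr_gt0.
  by exists x.
have xs_cvg : cvgn xs.
  apply: (@cvgn_sqr_dist_le _ _ _ (fun n => 2 * harmonic n)).
    by rewrite -(mulr0 2); apply: cvgMl_tmp; exact: cvg_harmonic.
  move=> n k; have := asym_rad_midpoint u_le ipP (xs n) (xs k).
  have := m_le (2^-1 *: (xs n + xs k)); have := xs_lt n; have := xs_lt k; lra.
set c := limn xs; exists c => x; apply: le_trans (m_le x).
have d0 : (fun n => `|xs n - c|) @ \oo --> 0 by apply/norm_cvg0P/subr_cvg0.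
set K := 2 * (M + `|c|).
have rhs : (fun n => m + harmonic n + (K + 3 * `|xs n - c|) * `|xs n - c|)
    @ \oo --> m + 0 + (K + 3 * 0) * 0.
  apply: cvgD; [apply: cvgD; [exact: cvg_cst|exact: cvg_harmonic]|].
  by apply: cvgM; [apply: cvgD; [exact: cvg_cst|exact: cvgMl_tmp d0]|exact: d0].
rewrite mulr0 !addr0 in rhs; apply: (ler_cvg_to (cvg_cst _) rhs).
apply: nearW => n; have := asym_rad_le_dist u_le (xs n) c.
by rewrite -/K; have := xs_lt n; lra.
Qed.

Variable T : H -> H.
Hypotheses (T_nonexp : nonexpansive T)
  (Tu : (fun k => `|T (u k) - u k|) @ \oo --> 0).

Lemma asym_center_fixed :
  exists c, T c = c /\ forall x, asym_rad u c <= asym_rad u x.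
Proof.
have [c c_min] := asym_rad_has_min; exists c; split => //.
have := asym_rad_midpoint u_le ipP c (T c); have := c_min (2^-1 *: (c + T c)).
have := asym_rad_T u_le T_nonexp Tu c => rT rmid rmid_le.
have : `|c - T c| ^+ 2 == 0 by rewrite eq_le sqr_ge0 andbT; lra.
by rewrite sqrf_eq0 normr_eq0 subr_eq0 => /eqP/esym.
Qed.

End AsymptoticCenter.

Section Opial.
Variables (R : realType) (H : completeNormedModType R) (ip : H -> H -> R).
Hypothesis ipP : is_inner_product ip.
Variable T : H -> H.
Hypothesis T_nonexp : nonexpansive T.
Variables (z : nat -> H) (M : R).
Hypotheses (z_le : forall k, `|z k| <= M)
  (Tz : (fun k => `|T (z k) - z k|) @ \oo --> 0)
  (z_fejer : forall p, T p = p -> cvgn (fun k => `|z k - p|)).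

Lemma asym_rad_subseq (n : nat -> nat) p : (forall j, (j <= n j)%N) -> T p = p ->
  asym_rad (z \o n) p = asym_rad z p.
Proof.
move=> n_ge Tp; have /cvg_ex [L zL] := z_fejer Tp.
have zL2 : (fun k => `|z k - p| ^+ 2) @ \oo --> L ^+ 2 by apply: cvgM.
rewrite /asym_rad (cvg_limn_inf_sup zL2).2.
exact: (cvg_limn_inf_sup (cvg_subseq_ge n_ge zL2)).2.
Qed.

Lemma asym_center_ip_lt c y e : T c = c -> (forall x, asym_rad z c <= asym_rad z x) ->
  0 < e -> \forall k \near \oo, ip (z k - c) y < e.
Proof.
move=> Tc c_min e0; apply: contrapT => not_ev.
have /choice [n nP] : forall N, exists k, (N <= k)%N /\ e <= ip (z k - c) y.
  move=> N; apply: contrapT => none; apply: not_ev; exists N => // k /= Nk.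
  by rewrite ltNge; apply/negP => ek; apply: none; exists k.
have n_ge j : (j <= n j)%N by case: (nP j).
have w_le j : `|(z \o n) j| <= M := z_le (n j).
have [c' [Tc' c'_min]] := asym_center_fixed ipP w_le T_nonexp (cvg_subseq_ge n_ge Tz).
set t := e / (`|y| ^+ 2 + 1).
have t0 : 0 < t by rewrite divr_gt0 // ltr_pwDr // exprn_ge0.
have ty : t * `|y| ^+ 2 < e.
  rewrite /t mulrAC ltr_pdivrMr ?ltr_pwDr ?exprn_ge0 //.
  by rewrite ltr_pM2l // ltrDl.
have : asym_rad (z \o n) (c + t *: y) <=
    asym_rad (z \o n) c + (t ^+ 2 * `|y| ^+ 2 - 2 * t * e).
  apply: limn_sup_le_add (bounded_sqr_dist w_le _) (bounded_sqr_dist w_le _) _.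
  apply: nearW => j /=; rewrite opprD addrA (sqr_normBZ ipP).
  by have := ler_wpM2l (ltW t0) (nP j).2; lra.
have := c'_min (c + t *: y); rewrite (asym_rad_subseq n_ge Tc').
have := c_min c'; rewrite -(asym_rad_subseq n_ge Tc).
have : t ^+ 2 * `|y| ^+ 2 < t * e by rewrite expr2 -mulrA ltr_pM2l.
have := mulr_gt0 t0 e0; lra.
Qed.

Lemma asym_center_weak_limit : exists c, fixed_point T c /\ weakly_converges ip z c.
Proof.
have [c [Tc c_min]] := asym_center_fixed ipP z_le T_nonexp Tz.
exists c; split => // y; apply/cvgrPdist_lt => e e0.
near=> k; rewrite -(ipBl ipP) -normrN -(ipNl ipP) opprB ltr_norml.
have : ip (z k - c) (- y) < e by near: k; exact: asym_center_ip_lt.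
have : ip (z k - c) y < e by near: k; exact: asym_center_ip_lt.
by rewrite (ipNr ipP) => -> ?; rewrite andbT ltrNl.
Unshelve. all: by end_near. Qed.

End Opial.

Section InertialStep.
Variables (R : realType) (H : normedModType R) (ip : H -> H -> R).
Hypothesis ipP : is_inner_product ip.
Implicit Types (u v ee x y : H).

Lemma sqr_norm_km_step_le u v ee l : 0 < l -> l <= 1 -> `|u + v| <= `|u| ->
  `|u + l *: (v + ee)| ^+ 2 + (1 - l) / l * `|l *: (v + ee)| ^+ 2 <=
  `|u| ^+ 2 + (2 * `|u| + 2 * `|v| + `|ee|) * `|ee|.
Proof.
move=> l0 l1 uv; have uv2 : `|u + v| ^+ 2 <= `|u| ^+ 2 by rewrite ler_sqr ?nnegrE.
rewrite (sqr_normD ipP u) in uv2.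
rewrite (sqr_normD ipP u) normrZ exprMn real_normK ?num_real // (ipZr ipP) (ipDr ipP).
rewrite (sqr_normD ipP v).
have -> : (1 - l) / l * (l ^+ 2 * (`|v| ^+ 2 + 2 * ip v ee + `|ee| ^+ 2)) =
  (1 - l) * l * (`|v| ^+ 2 + 2 * ip v ee + `|ee| ^+ 2) by field; lra.
have := ip_le_norm ipP u ee; have := ip_le_norm ipP v ee.
have := normr_ge0 u; have := normr_ge0 v; have := normr_ge0 ee => ee0 v0 u0 vee uee.
have q1 : l * (2 * ip u v + `|v| ^+ 2) <= 0 by rewrite pmulr_rle0 //; lra.
have q2 : l * ip u ee <= l * (`|u| * `|ee|) by rewrite ler_wpM2l //; lra.
have q3 : l * ip v ee <= l * (`|v| * `|ee|) by rewrite ler_wpM2l //; lra.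
have q4 : l * ((2 * `|u| + 2 * `|v| + `|ee|) * `|ee|) <=
    (2 * `|u| + 2 * `|v| + `|ee|) * `|ee|.
  by rewrite ler_piMl // mulr_ge0 //; lra.
nra.
Qed.

Lemma sqr_norm_inertial_ge x y (al a l d G : R) :
  0 <= al -> al <= a -> 0 < l -> l <= 1 -> 0 < d -> 0 <= G ->
  (a + d * l) * G <= (1 - l) * d ->
  G * `|x| ^+ 2 - (1 - l) * al * d * `|y| ^+ 2 <= (1 - l) / l * `|x - al *: y| ^+ 2.
Proof.
(* Times l * c, with c := al + d * l, the claim is a nonnegative combination of
   |x - c y|^2 and |x|^2. *)
move=> al0 ala l0 l1 d0 G0 aG; set c := al + d * l.
have c0 : 0 < c by rewrite /c ltr_pwDr // mulr_gt0.
have cG : c * G <= (1 - l) * d by apply: le_trans aG; rewrite ler_wpM2r // lerD2r.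
have xy0 := sqr_ge0 `|x - c *: y|; rewrite (sqr_normBZ ipP) in xy0.
rewrite (sqr_normBZ ipP); set A := `|x| ^+ 2; set B := `|y| ^+ 2; set P := ip x y.
set W := (1 - l) / l * (A - 2 * al * P + al ^+ 2 * B).
have WE : (W + (1 - l) * al * d * B) * (l * c) =
    (1 - l) * al * (A - 2 * c * P + c ^+ 2 * B) + (1 - l) * d * l * A.
  by rewrite /W /c; field; lra.
have : (l * c) * (G * A) <= (W + (1 - l) * al * d * B) * (l * c).
  rewrite WE; have A0 : 0 <= A by exact: sqr_ge0.
  have : l * A * (c * G) <= l * A * ((1 - l) * d) by rewrite ler_wpM2l // mulr_ge0 // ltW.
  have : 0 <= (1 - l) * al * (A - 2 * c * P + c ^+ 2 * B) by rewrite !mulr_ge0 // subr_ge0.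
  lra.
by rewrite mulrC ler_pM2r ?mulr_gt0 //; lra.
Qed.

End InertialStep.

Section InertialKM.
Variables (R : realType) (H : completeNormedModType R) (ip : H -> H -> R) (T : H -> H).
Variables (z mu e : nat -> H) (zm1 : H) (alpha lambda : nat -> R).
Variables (a lam sigma delta M SE : R).
Hypotheses (ipP : is_inner_product ip) (T_nonexp : nonexpansive T).
Hypotheses (alpha_nd : forall k, alpha k <= alpha k.+1)
  (lambda_nd : forall k, lambda k <= lambda k.+1).
Hypotheses (mu0 : mu 0%N = z 0%N + alpha 0%N *: (z 0%N - zm1))
  (muS : forall k, mu k.+1 = z k.+1 + alpha k.+1 *: (z k.+1 - z k))
  (zS : forall k, z k.+1 = mu k + lambda k *: (T (mu k) + e k - mu k)).
Hypotheses (a_bnd : 0 <= a < 1) (alpha_bnd : forall k, 0 <= alpha k <= a).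
Hypotheses (lam_gt0 : 0 < lam) (sigma_gt0 : 0 < sigma) (delta_gt0 : 0 < delta).
Hypothesis lambda_bnd : forall k, lam <= lambda k /\
  lambda k <= (delta - a * (a * (1 + a) + a * delta + sigma))
              / (delta * (1 + a * (1 + a) + a * delta + sigma)).
Hypotheses (z_le : forall k, `|z k| <= M)
  (e_sum : forall n, \sum_(0 <= k < n) `|e k| <= SE).

Let a_ge0 : 0 <= a. Proof. by case/andP: a_bnd. Qed.
Let a_lt1 : a < 1. Proof. by case/andP: a_bnd. Qed.
Let alpha_ge0 k : 0 <= alpha k. Proof. by case/andP: (alpha_bnd k). Qed.
Let alpha_le k : alpha k <= a. Proof. by case/andP: (alpha_bnd k). Qed.

Definition zprev k := if k is k'.+1 then z k' else zm1.

Lemma mu_extrapolate k : mu k = z k + alpha k *: (z k - zprev k).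
Proof. by case: k => [|k]; [exact: mu0 | exact: muS]. Qed.

Lemma lambda_gt0 k : 0 < lambda k.
Proof. exact: lt_le_trans lam_gt0 (lambda_bnd k).1. Qed.

Lemma lambda_rate k :
  (a + delta * lambda k) * (a * (1 + a) + a * delta + sigma) <= (1 - lambda k) * delta.
Proof.
have := (lambda_bnd k).2; set Q := a * (1 + a) + a * delta + sigma.
have -> : 1 + a * (1 + a) + a * delta + sigma = 1 + Q by rewrite /Q; ring.
have Q0 : 0 <= Q by rewrite /Q !addr_ge0 ?mulr_ge0 ?addr_ge0 // ltW.
rewrite ler_pdivlMr ?mulr_gt0 ?ltr_pwDl //; lra.
Qed.

Lemma lambda_le1 k : lambda k <= 1.
Proof.
have Q0 : 0 <= a * (1 + a) + a * delta + sigma.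
  by rewrite !addr_ge0 ?mulr_ge0 ?addr_ge0 // ltW.
have ad0 : 0 <= a + delta * lambda k by rewrite addr_ge0 // mulr_ge0 // ltW ?lambda_gt0.
by have := le_trans (mulr_ge0 ad0 Q0) (lambda_rate k); rewrite pmulr_lge0 // subr_ge0.
Qed.

Lemma zprev_le k : `|zprev k| <= M + `|zm1|.
Proof.
have := normr_ge0 zm1; have := le_trans (normr_ge0 _) (z_le 0).
by case: k => [|k] /=; [lra | have := z_le k; lra].
Qed.

Lemma mu_le k : `|mu k| <= (1 + 2 * a) * (M + `|zm1|).
Proof.
have zk : `|z k| <= M + `|zm1| by exact: (zprev_le k.+1).
have : alpha k * `|z k - zprev k| <= a * ((M + `|zm1|) + (M + `|zm1|)).
  apply: ler_pM; rewrite ?normr_ge0 //.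
  exact: le_trans (ler_normB _ _) (lerD zk (zprev_le k)).
rewrite mu_extrapolate; have := ler_normD (z k) (alpha k *: (z k - zprev k)).
by rewrite normrZ ger0_norm //; lra.
Qed.

Lemma e_le k : `|e k| <= SE.
Proof.
apply: le_trans (e_sum k.+1); rewrite big_nat_recr //= lerDr.
exact: sumr_ge0.
Qed.

Section FixedPoint.
Variable p : H.
Hypothesis Tp : T p = p.

Definition phi k := `|z k - p| ^+ 2.
Definition phi_prev k := `|zprev k - p| ^+ 2.
Definition dz k := `|z k - zprev k| ^+ 2.
Definition err k := (2 * `|mu k - p| + 2 * `|T (mu k) - mu k| + `|e k|) * `|e k|.

Lemma z_succ_sub_mu k : z k.+1 - mu k = lambda k *: ((T (mu k) - mu k) + e k).
Proof. by rewrite zS addrC addKr addrAC. Qed.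

Lemma phi_succ_le_mu k :
  phi k.+1 + (1 - lambda k) / lambda k * `|z k.+1 - mu k| ^+ 2 <=
  `|mu k - p| ^+ 2 + err k.
Proof.
rewrite /phi; have -> : z k.+1 - p = (mu k - p) + (z k.+1 - mu k).
  by rewrite [RHS]addrC subrKA.
rewrite z_succ_sub_mu; apply: (sqr_norm_km_step_le ipP) (lambda_gt0 k) (lambda_le1 k) _.
by rewrite addrC subrKA -{1}Tp; exact: T_nonexp.
Qed.

Definition gain k := a * (1 + a) + a * delta * (1 - lambda k) + sigma.

Lemma phi_succ_le k : phi k.+1 <= (1 + alpha k) * phi k - alpha k * phi_prev k
  + (alpha k * (1 + alpha k) + (1 - lambda k) * alpha k * delta) * dz k
  - gain k * dz k.+1 + err k.
Proof.
have := phi_succ_le_mu k.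
rewrite {2}(mu_extrapolate k) (sqr_norm_extrapolate ipP).
have -> : z k.+1 - mu k = (z k.+1 - z k) - alpha k *: (z k - zprev k).
  by rewrite mu_extrapolate opprD addrA.
have l0 := lambda_gt0 k; have l1 := lambda_le1 k.
have ld0 : 0 <= delta * lambda k by rewrite mulr_ge0 // ltW.
have gain0 : 0 <= gain k.
  have : 0 <= a * delta * (1 - lambda k) by rewrite !mulr_ge0 ?subr_ge0 ?a_ge0 // ltW.
  have := mulr_ge0 a_ge0 (addr_ge0 ler01 a_ge0); have := sigma_gt0; rewrite /gain; lra.
have gain_le : gain k <= a * (1 + a) + a * delta + sigma.
  have : a * delta * (1 - lambda k) <= a * delta.
    by rewrite ler_piMr ?mulr_ge0 ?(ltW delta_gt0) // gerBl ltW.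
  by rewrite /gain; lra.
have rate := le_trans (ler_wpM2l (addr_ge0 a_ge0 ld0) gain_le) (lambda_rate k).
have := sqr_norm_inertial_ge ipP (z k.+1 - z k) (z k - zprev k) (alpha_ge0 k)
  (alpha_le k) l0 l1 delta_gt0 gain0 rate.
rewrite /phi /phi_prev /dz /=; lra.
Qed.

Definition beta k := alpha k * (1 + alpha k) + alpha k * delta * (1 - lambda k).
Definition lyap k := phi k - alpha k * phi_prev k + beta k * dz k.

Lemma lyap_succ_le k : lyap k.+1 <= lyap k - sigma * dz k.+1 + err k.
Proof.
have phi0 : 0 <= phi k by exact: sqr_ge0.
have dz0 : 0 <= dz k.+1 by exact: sqr_ge0.
have b1 : alpha k.+1 * (1 + alpha k.+1) <= a * (1 + a).
  by rewrite ler_pM ?addr_ge0 ?lerD2l.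
have b2 : alpha k.+1 * delta * (1 - lambda k.+1) <= a * delta * (1 - lambda k).
  apply: ler_pM; rewrite ?mulr_ge0 ?subr_ge0 ?lambda_le1 ?(ltW delta_gt0) //.
    by rewrite ler_wpM2r ?(ltW delta_gt0).
  by rewrite lerD2l lerN2.
have : beta k.+1 * dz k.+1 <= (gain k - sigma) * dz k.+1.
  by rewrite ler_wpM2r // /beta /gain addrK; lra.
have : alpha k * phi k <= alpha k.+1 * phi k by rewrite ler_wpM2r.
have := phi_succ_le k.
rewrite /lyap /beta /phi_prev /phi /=; lra.
Qed.

Lemma err_ge0 k : 0 <= err k.
Proof. by rewrite /err mulr_ge0 // !addr_ge0 // mulr_ge0. Qed.

Lemma err_sum_le : exists S, forall n, \sum_(0 <= k < n) err k <= S.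
Proof.
set K := 6 * ((1 + 2 * a) * (M + `|zm1|) + `|p|) + SE.
have mup k : `|mu k - p| <= (1 + 2 * a) * (M + `|zm1|) + `|p|.
  exact: le_trans (ler_normB _ _) (lerD (mu_le k) (lexx _)).
have errK k : err k <= K * `|e k|.
  rewrite /err /K ler_wpM2r //.
  have : `|T (mu k) - mu k| <= 2 * `|mu k - p|.
    apply: le_trans (ler_distD (T p) _ _) _.
    by have := T_nonexp (mu k) p; rewrite Tp (distrC p); lra.
  by have := mup k; have := e_le k; lra.
have K0 : 0 <= K.
  have := le_trans (normr_ge0 _) (e_le 0); have := le_trans (normr_ge0 _) (mup 0%N).
  by rewrite /K; lra.
exists (K * SE) => n; apply: le_trans (ler_sum _ (fun k _ => errK k)) _.
by rewrite -mulr_sumr ler_wpM2l.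
Qed.

Lemma lyap_ge k : - (a * (M + `|zm1| + `|p|) ^+ 2) <= lyap k.
Proof.
have beta0 : 0 <= beta k.
  by rewrite /beta addr_ge0 // !mulr_ge0 ?subr_ge0 ?addr_ge0 ?lambda_le1 ?(ltW delta_gt0).
have B0 : 0 <= M + `|zm1| := le_trans (normr_ge0 _) (zprev_le 0).
have phi_prev_le : phi_prev k <= (M + `|zm1| + `|p|) ^+ 2.
  rewrite /phi_prev ler_sqr ?nnegrE ?(addr_ge0 B0) //.
  exact: le_trans (ler_normB _ _) (lerD (zprev_le k) (lexx _)).
have : alpha k * phi_prev k <= a * (M + `|zm1| + `|p|) ^+ 2.
  by apply: ler_pM; rewrite ?sqr_ge0.
have := mulr_ge0 beta0 (sqr_ge0 `|z k - zprev k|); have := sqr_ge0 `|z k - p|.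
by rewrite /lyap /phi /dz; lra.
Qed.

Lemma dz_sum_telescope n :
  sigma * \sum_(0 <= k < n) dz k.+1 <= lyap 0 - lyap n + \sum_(0 <= k < n) err k.
Proof.
elim: n => [|n IH]; first by rewrite !big_geq // mulr0 subrr addr0.
by rewrite !big_nat_recr //= mulrDr; have := lyap_succ_le n; lra.
Qed.

Lemma dz_sum_le : exists S, forall n, \sum_(0 <= k < n) dz k.+1 <= S.
Proof.
have [Se Se_le] := err_sum_le.
exists ((lyap 0 + a * (M + `|zm1| + `|p|) ^+ 2 + Se) / sigma) => n.
rewrite ler_pdivlMr // mulrC.
by have := dz_sum_telescope n; have := lyap_ge n; have := Se_le n; lra.
Qed.

Definition zeta k := alpha k * (1 + alpha k) * dz k + err k.
Definition theta k := Num.max (phi k - phi_prev k) 0.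

Lemma phi_succ_le_inertial k :
  phi k.+1 <= phi k + alpha k * (phi k - phi_prev k) + zeta k.
Proof.
have := phi_succ_le_mu k; rewrite {2}(mu_extrapolate k) (sqr_norm_extrapolate ipP).
have : 0 <= (1 - lambda k) / lambda k * `|z k.+1 - mu k| ^+ 2.
  by rewrite mulr_ge0 ?sqr_ge0 ?divr_ge0 ?subr_ge0 ?lambda_le1 ?ltW ?lambda_gt0.
by rewrite /zeta /phi /phi_prev /dz; lra.
Qed.

Lemma theta_succ_le k : theta k.+1 <= a * theta k + zeta k.
Proof.
have theta0 : 0 <= theta k by rewrite /theta le_max lexx orbT.
have zeta0 : 0 <= zeta k.
  by rewrite /zeta addr_ge0 ?err_ge0 // !mulr_ge0 ?addr_ge0 ?sqr_ge0.
have : alpha k * (phi k - phi_prev k) <= a * theta k.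
  apply: le_trans (_ : alpha k * theta k <= _); last by rewrite ler_wpM2r.
  by rewrite ler_wpM2l // /theta le_max lexx.
have := phi_succ_le_inertial k; have := mulr_ge0 a_ge0 theta0.
move=> atheta0 phi_le alpha_le_theta.
rewrite {1}/theta ge_max; apply/andP; split; last by lra.
by change (phi k.+1 - phi k <= a * theta k + zeta k); lra.
Qed.

Lemma zeta_sum_le : exists S, forall n, \sum_(0 <= k < n) zeta k <= S.
Proof.
have [Sd Sd_le] := dz_sum_le; have [Se Se_le] := err_sum_le.
exists (a * (1 + a) * (dz 0 + Sd) + Se) => n; rewrite /zeta big_split /=.
apply: lerD (Se_le n); apply: le_trans (_ : \sum_(0 <= k < n) a * (1 + a) * dz k <= _).
  apply: ler_sum => k _; apply: ler_wpM2r; first exact: sqr_ge0.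
  by apply: ler_pM; rewrite ?addr_ge0 ?lerD2l.
rewrite -mulr_sumr ler_wpM2l ?mulr_ge0 ?addr_ge0 //.
apply: le_trans (_ : \sum_(0 <= k < n.+1) dz k <= _).
  by apply: (@nondecreasing_series _ _ predT 0) => // k _ _; exact: sqr_ge0.
by rewrite big_nat_recl //= lerD2l.
Qed.

Lemma theta_sum_le : exists S, forall n, \sum_(0 <= k < n) theta k.+1 <= S.
Proof.
have [Sz Sz_le] := zeta_sum_le; exists ((a * theta 0 + Sz) / (1 - a)) => n.
rewrite ler_pdivlMr ?subr_gt0 //.
have theta0 k : 0 <= theta k by rewrite /theta le_max lexx orbT.
have : \sum_(0 <= k < n) theta k.+1 <=
    a * \sum_(0 <= k < n) theta k + \sum_(0 <= k < n) zeta k.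
  by rewrite mulr_sumr -big_split /=; apply: ler_sum => k _; exact: theta_succ_le.
have : \sum_(0 <= k < n) theta k <= theta 0 + \sum_(0 <= k < n) theta k.+1.
  apply: le_trans (_ : \sum_(0 <= k < n.+1) theta k <= _); last by rewrite big_nat_recl.
  by apply: (@nondecreasing_series _ _ predT 0) => // k _ _.
move=> shift step; have := ler_wpM2l a_ge0 shift; have := Sz_le n; lra.
Qed.

Lemma phi_cvg : cvgn phi.
Proof.
have [S S_le] := theta_sum_le.
apply: (quasi_fejer_is_cvg (fun k => sqr_ge0 _) _ S_le) => k.
  by rewrite /theta le_max lexx orbT.
have : phi k.+1 - phi k <= theta k.+1 by rewrite /theta le_max lexx.
by rewrite /phi; lra.
Qed.

Lemma z_succ_dist_cvg0 : (fun k => `|z k.+1 - z k|) @ \oo --> 0.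
Proof.
have [S S_le] := dz_sum_le; rewrite -sqrtr0.
by apply: cvg_sqrt_sqr => //; exact: bounded_series_cvg0 (fun k => sqr_ge0 _) S_le.
Qed.

Lemma z_dist_cvg0 : (fun k => `|z k - zprev k|) @ \oo --> 0.
Proof. by rewrite -cvg_shiftS; exact: z_succ_dist_cvg0. Qed.

Lemma mu_sub_z k : `|mu k - z k| <= a * `|z k - zprev k|.
Proof.
rewrite {1}mu_extrapolate addrC addKr normrZ ger0_norm //.
by rewrite ler_wpM2r.
Qed.

Lemma Tmu_res_le k :
  `|T (mu k) - mu k| <= (`|z k.+1 - z k| + a * `|z k - zprev k|) / lam + `|e k|.
Proof.
have l0 := lambda_gt0 k; have [laml _] := lambda_bnd k.
have step : lambda k * `|T (mu k) - mu k + e k| <=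
    `|z k.+1 - z k| + a * `|z k - zprev k|.
  rewrite -[X in X * _]gtr0_norm // -normrZ -z_succ_sub_mu.
  rewrite -[z k.+1 - mu k](subrKA (z k)).
  by apply: le_trans (ler_normD _ _) _; rewrite lerD2l distrC mu_sub_z.
have : `|T (mu k) - mu k + e k| <= (`|z k.+1 - z k| + a * `|z k - zprev k|) / lam.
  rewrite ler_pdivlMr // mulrC; apply: le_trans step.
  by rewrite ler_wpM2r.
by have := ler_normB (T (mu k) - mu k + e k) (e k); rewrite addrK; lra.
Qed.

Lemma Tmu_res_cvg0 : (fun k => `|T (mu k) - mu k|) @ \oo --> 0.
Proof.
have rhs : (fun k => (`|z k.+1 - z k| + a * `|z k - zprev k|) / lam + `|e k|)
    @ \oo --> (0 + a * 0) / lam + 0.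
  apply: cvgD; last exact: bounded_series_cvg0 (fun k => normr_ge0 _) e_sum.
  apply: cvgMr_tmp; apply: cvgD; [exact: z_succ_dist_cvg0 | exact: cvgMl_tmp z_dist_cvg0].
rewrite mulr0 !addr0 mul0r in rhs.
apply: (squeeze_cvgr _ (cvg_cst 0) rhs); apply: nearW => k.
by rewrite normr_ge0 Tmu_res_le.
Qed.

Lemma Tz_res_cvg0 : (fun k => `|T (z k) - z k|) @ \oo --> 0.
Proof.
have rhs : (fun k => 2 * a * `|z k - zprev k| + `|T (mu k) - mu k|)
    @ \oo --> 2 * a * 0 + 0.
  by apply: cvgD; [exact: cvgMl_tmp z_dist_cvg0 | exact: Tmu_res_cvg0].
rewrite mulr0 addr0 in rhs.
apply: (squeeze_cvgr _ (cvg_cst 0) rhs); apply: nearW => k.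
rewrite normr_ge0 /=; apply: le_trans (ler_distD (T (mu k)) _ _) _.
apply: le_trans (lerD (lexx _) (ler_distD (mu k) _ _)) _.
have := T_nonexp (z k) (mu k); have := mu_sub_z k; rewrite (distrC (z k) (mu k)).
by set r := `|T (mu k) - mu k|; lra.
Qed.

End FixedPoint.

Lemma inertial_km_cvg : (exists x, fixed_point T x) ->
  [/\ (\sum_(0 <= k <oo) (`|z k.+1 - z k| ^+ 2)%:E < +oo)%E,
      (fun k => `|z k.+1 - z k|) @ \oo --> 0,
      (forall zs, fixed_point T zs -> cvgn (fun k => `|z k - zs|)),
      (fun k => `|T (mu k) - mu k|) @ \oo --> 0
    & exists zs, fixed_point T zs /\ weakly_converges ip z zs].
Proof.
move=> [p Tp].
have fejer zs : fixed_point T zs -> cvgn (fun k => `|z k - zs|).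
  move=> Tzs; have /cvg_ex [L phiL] := phi_cvg Tzs.
  by apply/cvg_ex; exists (Num.sqrt L); exact: cvg_sqrt_sqr phiL.
split => //.
- by apply/nneseries_ltyP => //; exact: dz_sum_le Tp.
- exact: z_succ_dist_cvg0 Tp.
- exact: Tmu_res_cvg0 Tp.
- exact (asym_center_weak_limit ipP T_nonexp z_le (Tz_res_cvg0 Tp) fejer).
Qed.

End InertialKM.

Theorem theorem2 (R : realType) (H : completeNormedModType R)
  (ip : H -> H -> R) (T : H -> H)
  (z mu e : nat -> H) (zm1 : H) (alpha lambda : nat -> R)
  (a lam sigma delta : R) :
  is_inner_product ip ->
  nonexpansive T ->
  (exists x, fixed_point T x) ->
  (forall k, alpha k <= alpha k.+1) ->
  (forall k, lambda k <= lambda k.+1) ->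
  (* iteration, with z^{-1} = zm1 *)
  mu 0%N = z 0%N + alpha 0%N *: (z 0%N - zm1) ->
  (forall k, mu k.+1 = z k.+1 + alpha k.+1 *: (z k.+1 - z k)) ->
  (forall k, z k.+1 = mu k + lambda k *: (T (mu k) + e k - mu k)) ->
  (* (a) *)
  0 <= a < 1 ->
  (forall k, 0 <= alpha k <= a) ->
  alpha 0%N = 0 ->
  (* (b) *)
  0 < lam -> 0 < sigma -> 0 < delta ->
  delta > a * (a * (1 + a) + sigma) / (1 - a ^+ 2) ->
  (forall k, lam <= lambda k /\
     lambda k <= (delta - a * (a * (1 + a) + a * delta + sigma))
                 / (delta * (1 + a * (1 + a) + a * delta + sigma))) ->
  (* (c) *)
  (exists M : R, forall k, `|z k| <= M) ->
  (* (d) *)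
  (\sum_(0 <= k <oo) (`|e k|)%:E < +oo)%E ->
  [/\ (\sum_(0 <= k <oo) (`|z k.+1 - z k| ^+ 2)%:E < +oo)%E,
      (fun k => `|z k.+1 - z k|) @ \oo --> 0,
      (forall zs, fixed_point T zs -> cvgn (fun k => `|z k - zs|)),
      (fun k => `|T (mu k) - mu k|) @ \oo --> 0
    & exists zs, fixed_point T zs /\ weakly_converges ip z zs].
Proof.
move=> ipP T_nonexp fixT alpha_nd lambda_nd mu0 muS zS a_bnd alpha_bnd _
  lam_gt0 sigma_gt0 delta_gt0 _ lambda_bnd [M z_le].
move/(nneseries_ltyP (fun k => normr_ge0 (e k))) => [SE e_sum].
exact: (inertial_km_cvg ipP T_nonexp alpha_nd lambda_nd mu0 muS zS a_bnd alpha_bnd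
  lam_gt0 sigma_gt0 delta_gt0 lambda_bnd z_le e_sum fixT).
Qed.
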